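(* Let $\Gamma$ be a green Veldkamp quadrangle with point set $P$, and let $a,b\in P$ with ${\rm dist}(a,b)=4$ such that $a$ and $b$ are not opposite. Then $a^{\rm op}=b^{\rm op}$ and $\Gamma_2(a)=\Gamma_2(b)$.
   Context: A graph is a pair $(V,E)$ with $E$ a set of $2$-element subsets of $V$; $\Gamma_v$ is the set of neighbors of $v$; $\Gamma_m(v)=\{u\mid {\rm dist}(u,v)=m\}$. An $s$-path is a sequence $(x_0,\dots,x_s)$ of vertices with consecutive vertices adjacent and $x_{i-2}\ne x_i$ for $i\in[2,s]$. A closed $s$-path is an $s$-path with $s\ge3$ whose first and last vertices coincide; an $s$-circuit is the subgraph determined by a closed $s$-path. An opposition relation on a set $X$ is a symmetric anti-reflexive relation; trivial if any two distinct elements are related; $k$-plump if for every $S\subseteq X$ with $|S|\le k$ some element of $X$ is related to all elements of $S$. A Veldkamp graph is a graph with a $2$-plump opposition relation $\equiv_v$ on $\Gamma_v$ for each vertex $v$. A path $(v_0,\dots,v_s)$ is straight if $v_{i-1}\equiv_{v_i}v_{i+1}$ for all $i\in[1,s-1]$; a circuit is straight if every path in it is straight. A Veldkamp $n$-gon ($n\ge2$) is a Veldkamp graph satisfying (VP1) connected and bipartite; (VP2) for each $k\in[1,n-1]$ each straight $k$-path is the unique straight path between its endpoints of length at most $k$; (VP3) every straight $(n+1)$-path lies in a straight $2n$-circuit. A root is a straight $n$-path; two vertices are opposite if there is a root between them; $x^{\rm op}$ is the set of vertices opposite $x$. A Veldkamp quadrangle is a Veldkamp $4$-gon, with bipartition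 classes called points $P$ and lines $L$; it is green if $\equiv_x$ is trivial for every line $x$. *)

From Stdlib Require Import List Arith.
Import ListNotations.
Set Implicit Arguments.

Section Veldkamp.
Variable V : Type.
Variable adj : V -> V -> Prop.
(* opp v x y  means  x ≡_v y  (an opposition relation on Γ_v) *)
Variable opp : V -> V -> V -> Prop.

Definition simple_graph : Prop :=
  (forall x y, adj x y -> adj y x) /\ (forall x, ~ adj x x).

Definition is_walk (m : nat) (w : nat -> V) : Prop :=
  forall i, i < m -> adj (w i) (w (S i)).

Definition dist (u v : V) (m : nat) : Prop :=
  (exists w, w 0 = u /\ w m = v /\ is_walk m w) /\
  (forall m', m' < m -> ~ exists w, w 0 = u /\ w m' = v /\ is_walk m' w).

Definition connected : Prop :=
  forall u v, exists m w, w 0 = u /\ w m = v /\ is_walk m w.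

Definition bipartition (col : V -> bool) : Prop :=
  forall x y, adj x y -> col x <> col y.

Definition bipartite : Prop := exists col, bipartition col.

Definition is_path (s : nat) (x : nat -> V) : Prop :=
  is_walk s x /\ (forall i, 2 <= i <= s -> x (i - 2) <> x i).

Definition opposition_rel (X : V -> Prop) (R : V -> V -> Prop) : Prop :=
  (forall x y, R x y -> X x /\ X y) /\
  (forall x y, R x y -> R y x) /\
  (forall x, ~ R x x).

Definition trivial_rel (X : V -> Prop) (R : V -> V -> Prop) : Prop :=
  forall x y, X x -> X y -> x <> y -> R x y.

Definition plump (k : nat) (X : V -> Prop) (R : V -> V -> Prop) : Prop :=
  forall S : list V, length S <= k -> (forall y, In y S -> X y) ->
    exists x, X x /\ forall y, In y S -> R x y.

Definition nbhd (v : V) : V -> Prop := fun u => adj v u.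

Definition veldkamp_graph : Prop :=
  simple_graph /\
  forall v, opposition_rel (nbhd v) (opp v) /\ plump 2 (nbhd v) (opp v).

Definition straight (s : nat) (x : nat -> V) : Prop :=
  forall i, 1 <= i -> i <= s - 1 -> opp (x i) (x (i - 1)) (x (S i)).

Definition closed_path (s : nat) (c : nat -> V) : Prop :=
  is_path s c /\ 3 <= s /\ c 0 = c s.

Definition circ_edge (s : nat) (c : nat -> V) (u v : V) : Prop :=
  exists i, i < s /\ ((u = c i /\ v = c (S i)) \/ (v = c i /\ u = c (S i))).

Definition circ_vertex (s : nat) (c : nat -> V) (u : V) : Prop :=
  exists i, i <= s /\ u = c i.

Definition straight_circuit (s : nat) (c : nat -> V) : Prop :=
  forall m p, is_path m p -> circ_vertex s c (p 0) ->
    (forall i, i < m -> circ_edge s c (p i) (p (S i))) -> straight m p.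

Definition path_in_circuit (t : nat) (x : nat -> V) (s : nat) (c : nat -> V) : Prop :=
  (forall i, i <= t -> circ_vertex s c (x i)) /\
  (forall i, i < t -> circ_edge s c (x i) (x (S i))).

Definition veldkamp_ngon (n : nat) : Prop :=
  2 <= n /\ veldkamp_graph /\
  connected /\ bipartite /\
  (* VP2 *) (forall k, 1 <= k <= n - 1 -> forall x, is_path k x -> straight k x ->
      forall m y, m <= k -> is_path m y -> straight m y ->
        y 0 = x 0 -> y m = x k -> m = k /\ forall i, i <= k -> y i = x i) /\
  (* VP3 *) (forall x, is_path (S n) x -> straight (S n) x ->
      exists c, closed_path (2 * n) c /\ straight_circuit (2 * n) c /\
                path_in_circuit (S n) x (2 * n) c).

Definition root (n : nat) (x : nat -> V) : Prop := is_path n x /\ straight n x.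

Definition opposite (n : nat) (a b : V) : Prop :=
  exists x, root n x /\ x 0 = a /\ x n = b.

(* Veldkamp quadrangle with points = {x | pt x = true}, lines = the rest *)
Definition green (pt : V -> bool) : Prop :=
  forall x, pt x = false -> trivial_rel (nbhd x) (opp x).

End Veldkamp.

(* Since
   the quadrangle is green, any two distinct neighbours of a line are opposite
   at it, so a non-backtracking path is straight as soon as it is straight at
   its points.  The straight 8-circuit which VP3 provides around a straight
      5-path has eight distinct vertices (by colours, non-backtracking and
      VP2), so the path runs along it; hence every straight 5-path x0 .. x5
      closes up to a straight 8-circuit x0 .. x5 u6 u7 [straight5_closes].
   3. Roots from points: a 4-path from a point straight at its middle point
      is a root [root_from_point]; opposite points have no common neighbour
      [opposite_no_common_nbr]; closing an apartment produces opposite points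
      [opposite_by_closing].
   4. The main lemma [near_transfer]: if d(a,b) = 4 and a, b are not opposite,
      every point at distance 2 from a is at distance 2 from b.  Both halves of
      the proposition follow from it ([gamma2_transfer], [opposite_transfer]). *)
From Stdlib Require Import List Arith Lia Classical.
Import ListNotations.

Section Quadrangle.
Variable V : Type.
Variable adj : V -> V -> Prop.
Variable opp : V -> V -> V -> Prop.
Variable pt : V -> bool.
Hypothesis HV : veldkamp_ngon adj opp 4.
Hypothesis Hbip : bipartition adj pt.
Hypothesis Hgreen : green adj opp pt.
Set Implicit Arguments.

Lemma adj_sym u v : adj u v -> adj v u.
Proof. destruct HV as [_ [[[Hs _] _] _]]. auto. Qed.

Lemma opp_sym v x y : opp v x y -> opp v y x.
Proof. destruct HV as [_ [[_ H] _]]. apply (proj1 (proj2 (proj1 (H v)))). Qed.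

Lemma opp_neq v x y : opp v x y -> x <> y.
Proof.
  destruct HV as [_ [[_ H] _]]. intros Hxy <-.
  exact (proj2 (proj2 (proj1 (H v))) x Hxy).
Qed.

Lemma opp_common v y z : adj v y -> adj v z -> exists x, adj v x /\ opp v x y /\ opp v x z.
Proof.
  destruct HV as [_ [[_ H] _]]. intros Hy Hz.
  destruct (proj2 (H v) [y; z]) as [x [Hx Hs]].
  - simpl; lia.
  - intros w [<- | [<- | []]]; auto.
  - exists x. repeat split; auto; apply Hs; simpl; auto.
Qed.

Lemma colour_flip u v : adj u v -> pt v = negb (pt u).
Proof. intro H. pose proof (Hbip u v H). destruct (pt u), (pt v); simpl; congruence. Qed.

Lemma nbr_of_point u v : adj u v -> pt u = true -> pt v = false.
Proof. intros H Hu. rewrite (colour_flip H), Hu. reflexivity. Qed.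

Lemma nbr_of_line u v : adj u v -> pt u = false -> pt v = true.
Proof. intros H Hu. rewrite (colour_flip H), Hu. reflexivity. Qed.

Lemma line_opp l x y : pt l = false -> adj l x -> adj l y -> x <> y -> opp l x y.
Proof. intros Hl Hx Hy Hxy. exact (Hgreen l Hl x y Hx Hy Hxy). Qed.

Lemma straight_unique k x m y : 1 <= k <= 3 ->
  is_path adj k x -> straight opp k x -> m <= k -> is_path adj m y -> straight opp m y ->
  y 0 = x 0 -> y m = x k -> m = k /\ forall i, i <= k -> y i = x i.
Proof. destruct HV as [_ [_ [_ [_ [H _]]]]]. intros Hk Hx Sx. exact (H k ltac:(simpl; lia) x Hx Sx m y). Qed.

Lemma straight5_in_circuit x : is_path adj 5 x -> straight opp 5 x ->
  exists c, closed_path adj 8 c /\ straight_circuit adj opp 8 c /\ path_in_circuit 5 x 8 c.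
Proof. destruct HV as [_ [_ [_ [_ [_ H]]]]]. exact (H x). Qed.

Definition along (x0 : V) (l : list V) : nat -> V := fun i => nth i (x0 :: l) x0.

Ltac check_path := split;
  [ intros i Hi; do 7 (destruct i as [|i];
      [simpl; first [lia | assumption | apply adj_sym; assumption] |]); lia
  | intros i [Hi1 Hi2]; do 7 (destruct i as [|i];
      [simpl; first [lia | assumption | apply not_eq_sym; assumption] |]); lia ].

Ltac check_straight := intros i Hi1 Hi2; do 7 (destruct i as [|i];
  [simpl; first [lia | assumption | apply opp_sym; assumption] |]); lia.

Ltac mod8_lia := repeat match goal with
 | |- context [?t mod 8] => let q := fresh "q" in let r := fresh "r" in
     pose proof (Nat.div_mod_eq t 8); pose proof (Nat.mod_upper_bound t 8 ltac:(lia));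
     set (r := t mod 8) in *; set (q := t / 8) in *; clearbody r q
 | H : context [?t mod 8] |- _ => let q := fresh "q" in let r := fresh "r" in
     pose proof (Nat.div_mod_eq t 8); pose proof (Nat.mod_upper_bound t 8 ltac:(lia));
     set (r := t mod 8) in *; set (q := t / 8) in *; clearbody r q
 end; lia.

Section Octagon.
Variable c : nat -> V.
Hypothesis Hc : closed_path adj 8 c.
Hypothesis Hsc : straight_circuit adj opp 8 c.

Definition cyc (i : nat) : V := c (i mod 8).

Lemma cyc_mod i j : i mod 8 = j mod 8 -> cyc i = cyc j.
Proof. unfold cyc. intros ->. reflexivity. Qed.

Lemma c_cyc i : i <= 8 -> c i = cyc i.
Proof.
  intro Hi. unfold cyc. destruct (Nat.eq_dec i 8) as [-> | Hi8].
  - destruct Hc as [_ [_ H0]]. exact (eq_sym H0).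
  - rewrite Nat.mod_small; [reflexivity | lia].
Qed.

Lemma cyc_adj i : adj (cyc i) (cyc (S i)).
Proof.
  destruct Hc as [[Hw _] _]. unfold cyc at 1.
  rewrite (@cyc_mod (S i) (S (i mod 8))) by mod8_lia.
  rewrite <- c_cyc by mod8_lia. apply Hw. mod8_lia.
Qed.

Lemma cyc_edge i : circ_edge 8 c (cyc i) (cyc (S i)).
Proof.
  exists (i mod 8). split; [mod8_lia |]. left. split; [reflexivity |].
  rewrite c_cyc by mod8_lia. apply cyc_mod. mod8_lia.
Qed.

Lemma cyc_vertex i : circ_vertex 8 c (cyc i).
Proof. exists (i mod 8). split; [mod8_lia | reflexivity]. Qed.

(* The closing condition of [closed_path] only excludes backtracking at c 8;
   backtracking at c 0 = c 8 is excluded by VP2: otherwise the straight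
   3-paths c4 c5 c6 c7 and c4 c3 c2 c1 would join the same vertices. *)
Lemma c1_neq_c7 : c 1 <> c 7.
Proof.
  intro E. destruct Hc as [[Hw Hnb] _].
  pose proof (Hw 1 ltac:(lia)); pose proof (Hw 2 ltac:(lia)); pose proof (Hw 3 ltac:(lia)).
  pose proof (Hw 4 ltac:(lia)); pose proof (Hw 5 ltac:(lia)); pose proof (Hw 6 ltac:(lia)).
  pose proof (Hnb 3 ltac:(lia)); pose proof (Hnb 4 ltac:(lia)).
  pose proof (Hnb 5 ltac:(lia)); pose proof (Hnb 6 ltac:(lia)); pose proof (Hnb 7 ltac:(lia)).
  simpl in *.
  assert (Hfwd : is_path adj 3 (along (c 4) [c 5; c 6; c 7])) by check_path.
  assert (Hbwd : is_path adj 3 (along (c 4) [c 3; c 2; c 1])) by check_path.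
  assert (Sfwd : straight opp 3 (along (c 4) [c 5; c 6; c 7])).
  { apply Hsc; [exact Hfwd | exists 4; split; [lia | reflexivity] |].
    intros i Hi. destruct i as [|[|[|]]]; try lia; simpl.
    - exists 4. split; [lia | left; auto].
    - exists 5. split; [lia | left; auto].
    - exists 6. split; [lia | left; auto]. }
  assert (Sbwd : straight opp 3 (along (c 4) [c 3; c 2; c 1])).
  { apply Hsc; [exact Hbwd | exists 4; split; [lia | reflexivity] |].
    intros i Hi. destruct i as [|[|[|]]]; try lia; simpl.
    - exists 3. split; [lia | right; auto].
    - exists 2. split; [lia | right; auto].
    - exists 1. split; [lia | right; auto]. }
  destruct (straight_unique (k := 3) ltac:(lia) Hfwd Sfwd (le_n 3) Hbwd Sbwd eq_refl E)
    as [_ Hsame].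
  exact (Hnb 5 ltac:(lia) (Hsame 1 ltac:(lia))).
Qed.

Lemma cyc_nb i : cyc i <> cyc (i + 2).
Proof.
  destruct Hc as [[_ Hnb] _]. unfold cyc at 1.
  assert (Hlt : i mod 8 < 8) by (apply Nat.mod_upper_bound; lia).
  destruct (le_lt_dec (i mod 8) 6) as [Hi | Hi].
  - rewrite (@cyc_mod (i + 2) (i mod 8 + 2)) by mod8_lia.
    rewrite <- c_cyc by lia. pose proof (Hnb (i mod 8 + 2) ltac:(lia)) as Hn.
    rewrite Nat.add_sub in Hn. exact Hn.
  - replace (i mod 8) with 7 by lia.
    rewrite (@cyc_mod (i + 2) 1) by mod8_lia. rewrite <- c_cyc by lia.
    exact (not_eq_sym c1_neq_c7).
Qed.

(* Walking around the circuit from position s, forwards (e = 1) or backwards (e = 7). *)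
Definition direction (e : nat) : Prop := e = 1 \/ e = 7.

Definition arc (s e k : nat) : V := cyc (s + e * k).

Lemma arc_step s e k : direction e ->
  adj (arc s e k) (arc s e (S k)) /\ circ_edge 8 c (arc s e k) (arc s e (S k)).
Proof.
  intros [-> | ->]; unfold arc.
  - replace (s + 1 * S k) with (S (s + 1 * k)) by lia. split; [apply cyc_adj | apply cyc_edge].
  - rewrite (@cyc_mod (s + 7 * k) (S (s + 7 * S k))) by mod8_lia.
    destruct (cyc_edge (s + 7 * S k)) as [i [Hi Hedge]].
    split; [apply adj_sym, cyc_adj |].
    exists i. split; [exact Hi | tauto].
Qed.

Lemma arc_path s e m : direction e -> is_path adj m (arc s e).
Proof.
  intros He. split.
  - intros k _. apply arc_step, He.
  - intros k Hk. unfold arc. destruct He as [-> | ->].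
    + replace (s + 1 * k) with (s + 1 * (k - 2) + 2) by lia. apply cyc_nb.
    + rewrite (@cyc_mod (s + 7 * (k - 2)) (s + 7 * k + 2)) by mod8_lia.
      apply not_eq_sym, cyc_nb.
Qed.

Lemma arc_straight s e m : direction e -> straight opp m (arc s e).
Proof.
  intros He. apply Hsc; [apply arc_path, He | apply cyc_vertex |].
  intros i _. apply arc_step, He.
Qed.

Lemma cyc_colour k i : pt (cyc (i + k)) = xorb (Nat.odd k) (pt (cyc i)).
Proof.
  induction k as [|k IH].
  - rewrite Nat.add_0_r. reflexivity.
  - rewrite Nat.add_succ_r, (colour_flip (cyc_adj (i + k))), IH, Nat.odd_succ, <- Nat.negb_odd.
    destruct (Nat.odd k), (pt (cyc i)); reflexivity.
Qed.

(* The eight vertices of the circuit are distinct: odd gaps by colour, gaps 2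
   and 6 by non-backtracking, gap 4 by VP2 applied to two straight 2-paths. *)
Lemma cyc_gap_neq i g : 1 <= g <= 7 -> cyc i <> cyc (i + g).
Proof.
  intros Hg E.
  assert (Hcase : Nat.odd g = true \/ g = 2 \/ g = 4 \/ g = 6).
  { destruct g as [|[|[|[|[|[|[|[|g]]]]]]]]; simpl; auto; lia. }
  destruct Hcase as [Hodd | [-> | [-> | ->]]].
  - pose proof (cyc_colour g i) as Hcol. rewrite <- E, Hodd in Hcol.
    destruct (pt (cyc i)); discriminate.
  - exact (cyc_nb E).
  - assert (Hends : arc (i + 2) 1 2 = arc (i + 2) 7 2).
    { unfold arc. rewrite (@cyc_mod (i + 2 + 7 * 2) i) by mod8_lia.
      rewrite E. apply cyc_mod. mod8_lia. }
    destruct (straight_unique (k := 2) ltac:(lia) (arc_path (i + 2) 2 (or_intror eq_refl))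
                (arc_straight (i + 2) 2 (or_intror eq_refl)) (le_n 2)
                (arc_path (i + 2) 2 (or_introl eq_refl)) (arc_straight (i + 2) 2 (or_introl eq_refl))
                eq_refl Hends) as [_ Hsame].
    pose proof (Hsame 1 ltac:(lia)) as H1. unfold arc in H1.
    rewrite (@cyc_mod (i + 2 + 7 * 1) (i + 1)) in H1 by mod8_lia.
    replace (i + 2 + 1 * 1) with (i + 1 + 2) in H1 by lia.
    exact (cyc_nb (eq_sym H1)).
  - apply (@cyc_nb (i + 6)). rewrite <- E. apply cyc_mod. mod8_lia.
Qed.

Lemma cyc_inj i j : cyc i = cyc j -> i mod 8 = j mod 8.
Proof.
  intros E. destruct (lt_eq_lt_dec (i mod 8) (j mod 8)) as [[H | H] | H]; auto; exfalso.
  - apply (@cyc_gap_neq i (j mod 8 - i mod 8)); [mod8_lia |].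
    rewrite E. apply cyc_mod. mod8_lia.
  - apply (@cyc_gap_neq j (i mod 8 - j mod 8)); [mod8_lia |].
    rewrite <- E. apply cyc_mod. mod8_lia.
Qed.

Lemma circ_edge_next u v p : u = cyc p -> circ_edge 8 c u v -> v = cyc (S p) \/ v = cyc (p + 7).
Proof.
  intros Hu [i [Hi [[E1 E2] | [E2 E1]]]]; subst.
  - left. rewrite c_cyc in E1 by lia. apply cyc_inj in E1.
    rewrite c_cyc by lia. apply cyc_mod. mod8_lia.
  - right. rewrite c_cyc in E1 by lia. apply cyc_inj in E1.
    rewrite c_cyc by lia. apply cyc_mod. mod8_lia.
Qed.

(* A non-backtracking path inside the circuit keeps its direction. *)
Lemma path_follows_arc x s e : direction e -> is_path adj 5 x -> path_in_circuit 5 x 8 c ->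
  x 0 = arc s e 0 -> x 1 = arc s e 1 -> forall k, k <= 5 -> x k = arc s e k.
Proof.
  intros He [_ Hnb] [_ Hedge] H0 H1.
  assert (Hpair : forall k, k <= 4 -> x k = arc s e k /\ x (S k) = arc s e (S k)).
  { induction k as [|k IH]; intros Hk; [auto |].
    destruct (IH ltac:(lia)) as [Hprev Hcur]. split; [exact Hcur |].
    pose proof (Hnb (S (S k)) ltac:(lia)) as Hn.
    rewrite Nat.sub_succ, Nat.sub_succ, Nat.sub_0_r, Hprev in Hn.
    destruct (circ_edge_next Hcur (Hedge (S k) ltac:(lia))) as [E | E];
      rewrite E in *; destruct He as [-> | ->]; unfold arc in *.
    - apply cyc_mod. mod8_lia.
    - exfalso. apply Hn. apply cyc_mod. mod8_lia.
    - exfalso. apply Hn. apply cyc_mod. mod8_lia.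
    - apply cyc_mod. mod8_lia. }
  intros [|k] Hk; [exact H0 | apply Hpair; lia].
Qed.

Lemma path_is_arc x : is_path adj 5 x -> path_in_circuit 5 x 8 c ->
  exists s e, direction e /\ forall k, k <= 5 -> x k = arc s e k.
Proof.
  intros Hx Hin. pose proof Hin as [Hv Hedge].
  destruct (Hv 0 ltac:(lia)) as [j [Hj E0]]. rewrite c_cyc in E0 by exact Hj.
  assert (E0' : forall e, x 0 = arc j e 0).
  { intro e. unfold arc. rewrite E0, Nat.mul_0_r, Nat.add_0_r. reflexivity. }
  destruct (circ_edge_next E0 (Hedge 0 ltac:(lia))) as [E | E].
  - exists j, 1. split; [left; reflexivity |].
    apply (path_follows_arc (or_introl eq_refl) Hx Hin (E0' 1)).
    unfold arc. rewrite E. f_equal. lia.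
  - exists j, 7. split; [right; reflexivity |].
    apply (path_follows_arc (or_intror eq_refl) Hx Hin (E0' 7)).
    rewrite E. reflexivity.
Qed.
End Octagon.

(* Closing an apartment: by VP3 and [path_is_arc], a straight 5-path x0 .. x5
   extends to a straight closed 8-path x0 .. x5 u6 u7 x0. *)
Lemma straight5_closes x : is_path adj 5 x -> straight opp 5 x ->
  exists u6 u7, adj (x 5) u6 /\ adj u6 u7 /\ adj u7 (x 0) /\ opp u6 (x 5) u7 /\
    opp (x 0) (x 1) u7 /\ u6 <> x 4 /\ u6 <> x 0.
Proof.
  intros Hx Sx. destruct (straight5_in_circuit Hx Sx) as [c [Hc [Hsc Hin]]].
  destruct (path_is_arc Hc Hsc Hx Hin) as [s [e [He Harc]]].
  assert (Hwrap : forall k, arc c s e (k + 8) = arc c s e k).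
  { intro k. unfold arc. apply cyc_mod. mod8_lia. }
  pose proof (arc_path Hc Hsc s 9 He) as [Hadj Hnb].
  pose proof (arc_straight Hc Hsc s 9 He) as Hstr.
  exists (arc c s e 6), (arc c s e 7). rewrite !Harc by lia.
  rewrite <- (Hwrap 0), <- (Hwrap 1). simpl.
  repeat split.
  - apply Hadj; lia.
  - apply Hadj; lia.
  - apply Hadj; lia.
  - apply (Hstr 6); lia.
  - apply opp_sym, (Hstr 8); lia.
  - apply not_eq_sym, (Hnb 6); lia.
  - apply (Hnb 8); lia.
Qed.

Lemma colour_two_steps u v w : adj u v -> adj v w -> pt w = pt u.
Proof. intros H1 H2. rewrite (colour_flip H2), (colour_flip H1). destruct (pt u); reflexivity. Qed.

Definition no_common_nbr (u v : V) : Prop := forall Y, adj u Y -> adj Y v -> False.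

(* Greenness makes every non-backtracking path straight at its lines; hence a
   4-path from a point is a root once it is straight at its middle point. *)
Lemma root_from_point a L p M b : pt a = true -> adj a L -> adj L p -> adj p M -> adj M b ->
  a <> p -> p <> b -> opp p L M -> opposite adj opp 4 a b.
Proof.
  intros Pa aL Lp pM Mb nap npb oLM.
  assert (PL : pt L = false) by exact (nbr_of_point aL Pa).
  assert (PM : pt M = false) by (rewrite (colour_two_steps Lp pM); exact PL).
  assert (oL : opp L a p) by (apply line_opp; auto using adj_sym).
  assert (oM : opp M p b) by (apply line_opp; auto using adj_sym).
  pose proof (opp_neq oLM) as nLM.
  exists (along a [L; p; M; b]). split; [split; [check_path | check_straight] | auto].
Qed.

Lemma opposite_elim a x : opposite adj opp 4 a x ->
  exists N p K, adj a N /\ adj N p /\ adj p K /\ adj K x /\ a <> p /\ p <> x /\ opp p N K.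
Proof.
  intros [r [[[Hw Hnb] Hs] [H0 H4]]]. subst.
  exists (r 1), (r 2), (r 3).
  repeat split; try apply Hw; try lia.
  - exact (Hnb 2 ltac:(lia)).
  - exact (Hnb 4 ltac:(lia)).
  - exact (Hs 2 ltac:(lia) ltac:(lia)).
Qed.

(* A point is not opposite itself: the two halves of such a root would be
   distinct straight 2-paths with the same ends, against VP2. *)
Lemma opposite_neq a x : pt a = true -> opposite adj opp 4 a x -> a <> x.
Proof.
  intros Pa Hax <-. destruct (opposite_elim Hax) as (N & p & K & aN & Np & pK & Ka & nap & npa & oNK).
  assert (PN : pt N = false) by exact (nbr_of_point aN Pa).
  assert (PK : pt K = false) by (rewrite (colour_two_steps Np pK); exact PN).
  assert (oN : opp N p a) by (apply line_opp; auto using adj_sym).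
  assert (oK : opp K p a) by (apply line_opp; auto using adj_sym).
  assert (HN : is_path adj 2 (along p [N; a])) by check_path.
  assert (SN : straight opp 2 (along p [N; a])) by check_straight.
  assert (HK : is_path adj 2 (along p [K; a])) by check_path.
  assert (SK : straight opp 2 (along p [K; a])) by check_straight.
  destruct (straight_unique (k := 2) ltac:(lia) HN SN (le_n 2) HK SK eq_refl eq_refl) as [_ Hsame].
  exact (opp_neq oNK (eq_sym (Hsame 1 ltac:(lia)))).
Qed.

(* Given a root a L p M b and a
   line K on a and b, extend the reversed root by a line K2 opposite L and K
   at a and close the apartment: the straight 3-paths K2 a K b and
   K2 u6 u7 b then contradict VP2. *)
Lemma opposite_no_common_nbr a b : pt a = true -> opposite adj opp 4 a b -> no_common_nbr a b.
Proof.
  intros Pa Hab K aK Kb. pose proof (opposite_neq Pa Hab) as nab.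
  destruct (opposite_elim Hab) as (L & p & M & aL & Lp & pM & Mb & nap & npb & oLM).
  assert (PL : pt L = false) by exact (nbr_of_point aL Pa).
  assert (PM : pt M = false) by (rewrite (colour_two_steps Lp pM); exact PL).
  assert (PK : pt K = false) by exact (nbr_of_point aK Pa).
  destruct (opp_common aL aK) as (K2 & aK2 & oK2L & oK2K).
  assert (PK2 : pt K2 = false) by exact (nbr_of_point aK2 Pa).
  assert (oM : opp M b p) by (apply line_opp; auto using adj_sym).
  assert (oL : opp L p a) by (apply line_opp; auto using adj_sym).
  assert (oK : opp K a b) by (apply line_opp; auto using adj_sym).
  pose proof (opp_neq oLM) as nLM. pose proof (opp_neq oK2L) as nK2L. pose proof (opp_neq oK2K) as nK2K.
  assert (Hx : is_path adj 5 (along b [M; p; L; a; K2])) by check_path.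
  assert (Sx : straight opp 5 (along b [M; p; L; a; K2])) by check_straight.
  destruct (straight5_closes Hx Sx) as (u6 & u7 & K2u6 & u6u7 & u7b & ou6 & _ & nu6a & nu6b).
  simpl in *.
  assert (Pu6 : pt u6 = true) by (rewrite (colour_two_steps aK2 K2u6); exact Pa).
  assert (Pu7 : pt u7 = false) by exact (nbr_of_point u6u7 Pu6).
  assert (ou7 : opp u7 u6 b) by (apply line_opp; auto using adj_sym).
  pose proof (opp_neq ou6) as nK2u7.
  assert (HP : is_path adj 3 (along K2 [a; K; b])) by check_path.
  assert (SP : straight opp 3 (along K2 [a; K; b])) by check_straight.
  assert (HQ : is_path adj 3 (along K2 [u6; u7; b])) by check_path.
  assert (SQ : straight opp 3 (along K2 [u6; u7; b])) by check_straight.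
  destruct (straight_unique (k := 3) ltac:(lia) HP SP (le_n 3) HQ SQ eq_refl eq_refl) as [_ Hsame].
  exact (nu6a (Hsame 1 ltac:(lia))).
Qed.

(* A straight 5-path from a point x0 whose end is adjacent to a point b with
   no common neighbour with x0 closes up to an apartment x0 .. x5 u6 u7, and
   x0 u7 u6 x5 b is then a root: x0 is opposite b. *)
Lemma opposite_by_closing x b : is_path adj 5 x -> straight opp 5 x -> pt (x 0) = true ->
  adj (x 5) b -> no_common_nbr (x 0) b -> opposite adj opp 4 (x 0) b.
Proof.
  intros Hx Sx Px0 x5b Hfar.
  destruct (straight5_closes Hx Sx) as (u6 & u7 & x5u6 & u6u7 & u7x0 & ou6 & _ & _ & nu6x0).
  destruct (classic (u6 = b)) as [<- | nu6b].
  - destruct (Hfar u7 (adj_sym u7x0) (adj_sym u6u7)).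
  - apply (root_from_point Px0 (adj_sym u7x0) (adj_sym u6u7) (adj_sym x5u6) x5b);
      auto using opp_sym.
Qed.

Section NearPoints.
Variables a b : V.
Hypothesis Pa : pt a = true.
Hypothesis Hfar : no_common_nbr a b.
Hypothesis Hnop : ~ opposite adj opp 4 a b.

(* Close the apartment of x N a L p K (K opposite L
   and M at p) to x N a L p K d R, then that of b M p K d R to
   b M p K d R e T.  If e = x, T is the required line; otherwise
   a N x R e T is a straight 5-path ending next to b, making a opposite b. *)
Lemma near_via_opposite_line L p M x N : adj a L -> adj L p -> adj p M -> adj M b ->
  a <> p -> p <> b -> adj x N -> adj N a -> x <> a -> opp a N L ->
  exists T, adj x T /\ adj T b.
Proof.
  intros aL Lp pM Mb nap npb xN Na nxa oNL.
  assert (PL : pt L = false) by exact (nbr_of_point aL Pa).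
  assert (Pp : pt p = true) by exact (nbr_of_line Lp PL).
  assert (PM : pt M = false) by exact (nbr_of_point pM Pp).
  assert (PN : pt N = false) by exact (nbr_of_point (adj_sym Na) Pa).
  assert (Px : pt x = true) by exact (nbr_of_line (adj_sym xN) PN).
  destruct (opp_common (adj_sym Lp) pM) as (K & pK & oKL & oKM).
  assert (PK : pt K = false) by exact (nbr_of_point pK Pp).
  assert (oN : opp N x a) by (apply line_opp; auto using adj_sym).
  assert (oL : opp L a p) by (apply line_opp; auto using adj_sym).
  pose proof (opp_neq oNL) as nNL. pose proof (opp_neq oKL) as nKL. pose proof (opp_neq oKM) as nKM.
  assert (Hx1 : is_path adj 5 (along x [N; a; L; p; K])) by check_path.
  assert (Sx1 : straight opp 5 (along x [N; a; L; p; K])) by check_straight.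
  destruct (straight5_closes Hx1 Sx1) as (d & R & Kd & dR & Rx & odKR & oxNR & ndp & _).
  simpl in *.
  assert (Pd : pt d = true) by exact (nbr_of_line Kd PK).
  assert (PR : pt R = false) by exact (nbr_of_point dR Pd).
  assert (oM : opp M b p) by (apply line_opp; auto using adj_sym).
  assert (oK : opp K p d) by (apply line_opp; auto using adj_sym).
  pose proof (opp_neq odKR) as nKR.
  assert (Hx2 : is_path adj 5 (along b [M; p; K; d; R])) by check_path.
  assert (Sx2 : straight opp 5 (along b [M; p; K; d; R])) by check_straight.
  destruct (straight5_closes Hx2 Sx2) as (e & T & Re & eT & Tb & oeRT & _ & _ & _).
  simpl in *.
  destruct (classic (e = x)) as [-> | nex]; [exists T; auto |].
  exfalso. apply Hnop.
  assert (oR : opp R x e) by (apply line_opp; auto using adj_sym).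
  pose proof (opp_neq oxNR) as nNR. pose proof (opp_neq oeRT) as nRT.
  assert (Hx3 : is_path adj 5 (along a [N; x; R; e; T])) by check_path.
  assert (Sx3 : straight opp 5 (along a [N; x; R; e; T])) by check_straight.
  exact (opposite_by_closing Hx3 Sx3 Pa Tb Hfar).
Qed.

(* General case: choose a line K at a opposite both L and N, and a point y on
   K other than a.  The special case applied to y (through K, opposite L)
   yields a new 4-path a K y T1 b, along which N is opposite K. *)
Lemma near_via_path L p M x N : adj a L -> adj L p -> adj p M -> adj M b ->
  a <> p -> p <> b -> adj x N -> adj N a -> x <> a -> exists T, adj x T /\ adj T b.
Proof.
  intros aL Lp pM Mb nap npb xN Na nxa.
  destruct (opp_common aL (adj_sym Na)) as (K & aK & oKL & oKN).
  destruct (opp_common (adj_sym aK) (adj_sym aK)) as (y & Ky & oya & _).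
  pose proof (opp_neq oya) as nya.
  destruct (near_via_opposite_line aL Lp pM Mb nap npb (adj_sym Ky) (adj_sym aK) nya oKL)
    as (T1 & yT1 & T1b).
  assert (nyb : y <> b) by (intros <-; exact (Hfar aK Ky)).
  exact (near_via_opposite_line aK Ky yT1 T1b (not_eq_sym nya) nyb xN Na nxa (opp_sym oKN)).
Qed.
End NearPoints.

Lemma reverse_walk m w : is_walk adj m w -> is_walk adj m (fun i => w (m - i)).
Proof. intros Hw i Hi. replace (m - i) with (S (m - S i)) by lia. apply adj_sym, Hw. lia. Qed.

Lemma dist_sym u v m : dist adj u v m -> dist adj v u m.
Proof.
  intros [[w [H0 [Hm Hw]]] Hmin]. split.
  - exists (fun i => w (m - i)). rewrite Nat.sub_0_r, Nat.sub_diag. auto using reverse_walk.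
  - intros m' Hm' [w' [H0' [Hm'' Hw']]]. apply (Hmin m' Hm').
    exists (fun i => w' (m' - i)). rewrite Nat.sub_0_r, Nat.sub_diag. auto using reverse_walk.
Qed.

Lemma opposite_sym u v : opposite adj opp 4 u v -> opposite adj opp 4 v u.
Proof.
  intros [x [[[Hw Hnb] Hs] [H0 H4]]]. exists (fun i => x (4 - i)).
  split; [split; [split |] |].
  - apply reverse_walk, Hw.
  - intros i Hi. replace (4 - (i - 2)) with (4 - i + 2) by lia.
    apply not_eq_sym. replace (4 - i) with (4 - i + 2 - 2) at 1 by lia. apply Hnb. lia.
  - intros i Hi1 Hi2. replace (4 - (i - 1)) with (S (4 - i)) by lia.
    replace (4 - S i) with (4 - i - 1) by lia. apply opp_sym, Hs; lia.
  - simpl. auto.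
Qed.

Lemma dist4_elim a b : dist adj a b 4 ->
  (exists L p M, adj a L /\ adj L p /\ adj p M /\ adj M b /\ a <> p /\ p <> b) /\
  no_common_nbr a b.
Proof.
  intros [[w [H0 [H4 Hw]]] Hmin]. subst.
  assert (Hfar : no_common_nbr (w 0) (w 4)).
  { intros Y H1 H2. apply (Hmin 2 ltac:(lia)). exists (along (w 0) [Y; w 4]).
    split; [reflexivity | split; [reflexivity |]].
    intros i Hi. destruct i as [|[|]]; simpl; auto; lia. }
  split; [| exact Hfar].
  exists (w 1), (w 2), (w 3). repeat split; try apply Hw; try lia.
  - intros E. apply (Hfar (w 3)); [rewrite E |]; apply Hw; lia.
  - intros E. apply (Hfar (w 1)); [| rewrite <- E]; apply Hw; lia.
Qed.

(* Two points with no common neighbour joined by a 4-walk are at distance 4;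
   distances 1 and 3 are excluded by the colouring. *)
Lemma dist4_intro u A B C v : pt u = true -> u <> v -> no_common_nbr u v ->
  adj u A -> adj A B -> adj B C -> adj C v -> dist adj u v 4.
Proof.
  intros Pu nuv Hfar uA AB BC Cv. split.
  - exists (along u [A; B; C; v]). split; [reflexivity | split; [reflexivity |]].
    intros i Hi. destruct i as [|[|[|[|]]]]; simpl; auto; lia.
  - intros m Hm [w [H0 [Hm' Hw]]].
    assert (Pv : pt v = true) by (rewrite (colour_two_steps BC Cv), (colour_two_steps uA AB); exact Pu).
    destruct m as [|m]; [congruence |].
    assert (Pw1 : pt (w 1) = false) by (subst; exact (nbr_of_point (Hw 0 ltac:(lia)) Pu)).
    destruct m as [|[|[|m]]]; try lia.
    + congruence.
    + subst. exact (Hfar (w 1) (Hw 0 ltac:(lia)) (Hw 1 ltac:(lia))).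
    + subst. rewrite (colour_two_steps (Hw 1 ltac:(lia)) (Hw 2 ltac:(lia))) in Pv. congruence.
Qed.

Lemma dist2_elim x a : dist adj x a 2 -> exists N, adj x N /\ adj N a /\ x <> a.
Proof.
  intros [[w [H0 [H2 Hw]]] Hmin]. exists (w 1). subst. repeat split; try apply Hw; try lia.
  intros E. apply (Hmin 0 ltac:(lia)). exists (fun _ => w 0). repeat split; auto.
  intros i Hi; lia.
Qed.

Lemma dist2_intro u T v : pt u = true -> u <> v -> adj u T -> adj T v -> dist adj u v 2.
Proof.
  intros Pu nuv uT Tv. split.
  - exists (along u [T; v]). split; [reflexivity | split; [reflexivity |]].
    intros i Hi. destruct i as [|[|]]; simpl; auto; lia.
  - intros m Hm [w [H0 [Hm' Hw]]]. destruct m as [|[|m]]; try lia.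
    + congruence.
    + assert (Pv : pt v = true) by (rewrite (colour_two_steps uT Tv); exact Pu).
      subst. pose proof (nbr_of_point (Hw 0 ltac:(lia)) Pu). congruence.
Qed.

Lemma near_transfer a b x N : pt a = true -> dist adj a b 4 -> ~ opposite adj opp 4 a b ->
  adj x N -> adj N a -> x <> a -> exists T, adj x T /\ adj T b.
Proof.
  intros Pa Hab Hnab xN Na nxa.
  destruct (dist4_elim Hab) as [(L & p & M & aL & Lp & pM & Mb & nap & npb) Hfar].
  exact (near_via_path Pa Hfar Hnab aL Lp pM Mb nap npb xN Na nxa).
Qed.

Lemma gamma2_transfer a b x : pt a = true -> dist adj a b 4 -> ~ opposite adj opp 4 a b ->
  dist adj x a 2 -> dist adj x b 2.
Proof.
  intros Pa Hab Hnab Hxa. destruct (dist2_elim Hxa) as (N & xN & Na & nxa).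
  destruct (near_transfer Pa Hab Hnab xN Na nxa) as (T & xT & Tb).
  assert (Px : pt x = true) by (rewrite <- (colour_two_steps xN Na); exact Pa).
  refine (dist2_intro Px _ xT Tb).
  intros <-. exact (proj2 (dist4_elim Hab) N (adj_sym Na) (adj_sym xN)).
Qed.

(* Let a N p K x be a root and suppose b not opposite x.
   Then b and x are at distance 4 (joined via the common neighbour B of p and b,
   and with no common neighbour, since otherwise x would be at distance 2
   from a).  A point y on N opposite a and p is opposite x, and at distance 2
   from b, hence by [near_transfer] for (b, x) at distance 2 from x:
   a contradiction. *)
Lemma opposite_transfer a b x : pt a = true -> pt b = true -> dist adj a b 4 ->
  ~ opposite adj opp 4 a b -> opposite adj opp 4 a x -> opposite adj opp 4 b x.
Proof.
  intros Pa Pb Hab Hnab Hax. apply NNPP. intros Hnbx.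
  pose proof (dist4_elim Hab) as [_ Hfar_ab].
  assert (Hba : dist adj b a 4) by exact (dist_sym Hab).
  assert (Hnba : ~ opposite adj opp 4 b a) by (intros H; exact (Hnab (opposite_sym H))).
  destruct (opposite_elim Hax) as (N & p & K & aN & Np & pK & Kx & nap & npx & oNK).
  destruct (near_transfer Pa Hab Hnab (adj_sym Np) (adj_sym aN) (not_eq_sym nap)) as (B & pB & Bb).
  destruct (opp_common (adj_sym aN) Np) as (y & Ny & oya & oyp).
  destruct (near_transfer Pa Hab Hnab (adj_sym Ny) (adj_sym aN) (opp_neq oya)) as (T & yT & Tb).
  assert (Py : pt y = true) by (rewrite <- (colour_two_steps (adj_sym Ny) (adj_sym aN)); exact Pa).
  assert (Hyx : opposite adj opp 4 y x) by exact (root_from_point Py (adj_sym Ny) Np pK Kx (opp_neq oyp) npx oNK).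
  assert (nbx : b <> x) by (intros <-; exact (Hnab Hax)).
  assert (Hfar_bx : no_common_nbr b x).
  { intros Y bY Yx.
    destruct (near_transfer Pb Hba Hnba (adj_sym Yx) (adj_sym bY) (not_eq_sym nbx)) as (T' & xT' & T'a).
    exact (opposite_no_common_nbr Pa Hax (adj_sym T'a) (adj_sym xT')). }
  assert (Hbx : dist adj b x 4) by exact (dist4_intro Pb nbx Hfar_bx (adj_sym Bb) (adj_sym pB) pK Kx).
  assert (nyb : y <> b) by (intros <-; exact (Hfar_ab N aN Ny)).
  destruct (near_transfer Pb Hbx Hnbx yT Tb nyb) as (T' & yT' & T'x).
  exact (opposite_no_common_nbr Py Hyx yT' T'x).
Qed.
End Quadrangle.

Theorem proposition3p7 (V : Type) (adj : V -> V -> Prop) (opp : V -> V -> V -> Prop)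
    (pt : V -> bool) :
  veldkamp_ngon adj opp 4 -> bipartition adj pt -> green adj opp pt ->
  forall a b : V, pt a = true -> pt b = true ->
    dist adj a b 4 -> ~ opposite adj opp 4 a b ->
    (forall x, opposite adj opp 4 a x <-> opposite adj opp 4 b x) /\
    (forall x, dist adj x a 2 <-> dist adj x b 2).
Proof.
  intros HV Hbip Hgreen a b Pa Pb Hab Hnab.
  assert (Hba : dist adj b a 4) by exact (dist_sym HV Hab).
  assert (Hnba : ~ opposite adj opp 4 b a) by (intros H; exact (Hnab (opposite_sym HV H))).
  split; intro x; split.
  - exact (opposite_transfer HV Hbip Hgreen Pa Pb Hab Hnab).
  - exact (opposite_transfer HV Hbip Hgreen Pb Pa Hba Hnba).
  - exact (gamma2_transfer HV Hbip Hgreen Pa Hab Hnab).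
  - exact (gamma2_transfer HV Hbip Hgreen Pb Hba Hnba).
Qed.
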